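(* Let $n\ge2$ and let $\mathbf{Z}^*$, $\mathbf{m}$, $\mathbf{S}$, $\mathbf{D}$ be as in the context. Then the partial maxima BLUE of $\theta_2$ has the form \[ L_2=\frac{\mathbf{m}'\mathbf{S}^{-1}\mathbf{Z}^*}{\mathbf{m}'\mathbf{S}^{-1}\mathbf{m}},\qquad\text{with}\qquad \operatorname{Var}[L_2]=\frac{\theta_2^2}{\mathbf{m}'\mathbf{S}^{-1}\mathbf{m}}, \] and the partial maxima BLIE of $\theta_2$ has the form \[ T_2=\mathbf{m}'\mathbf{D}^{-1}\mathbf{Z}^*,\qquad\text{with}\qquad \mathrm{MSE}[T_2]=(1-\mathbf{m}'\mathbf{D}^{-1}\mathbf{m})\theta_2^2. \]
   Context: $F$ is a known, parameter-free, non-degenerate distribution function on $\mathbb{R}$ with finite variance. For unknown $\theta_1\in\mathbb{R}$, $\theta_2>0$, $X_1^*,\dots,X_n^*$ are i.i.d. with distribution function $F((x-\theta_1)/\theta_2)$ and $X^*_{j:j}=\max\{X_1^*,\dots,X_j^*\}$; $X_1,\dots,X_n$ are i.i.d. from $F$ and $X_{j:j}=\max\{X_1,\dots,X_j\}$. Partial maxima spacings: $Z_i^*=X^*_{i+1:i+1}-X^*_{i:i}$, $Z_i=X_{i+1:i+1}-X_{i:i}$, $i=1,\dots,n-1$; $\mathbf{Z}^*=(Z_1^*,\dots,Z^*_{n-1})'$, $\mathbf{Z}=(Z_1,\dots,Z_{n-1})'$, $\mathbf{m}=\mathbb{E}[\mathbf{Z}]$, $\mathbf{S}$ the covariance matrix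 of $\mathbf{Z}$, $\mathbf{D}=\mathbb{E}[\mathbf{Z}\mathbf{Z}']$ (both positive definite). Linear estimators are $\sum_i c_iX^*_{i:i}$ with constant $c_i$. The BLUE of $\theta_2$ is the linear estimator unbiased for $\theta_2$ for all $(\theta_1,\theta_2)$ with minimum variance. A linear statistic $L=\mathbf{c}'\mathbf{X}^*$ is invariant for $\theta_2$ if $L(b\mathbf{X}^*+a\mathbf{1})=bL(\mathbf{X}^* )$ for all $a\in\mathbb{R}$, $b>0$; the BLIE of $\theta_2$ minimizes $\mathbb{E}[L-\theta_2]^2$ among such statistics. *)

From HB Require Import structures.
From mathcomp Require Import all_boot all_order all_algebra.
From mathcomp Require Import all_classical all_reals all_analysis.
Set Implicit Arguments. Unset Strict Implicit. Unset Printing Implicit Defensive.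
Import Order.TTheory GRing.Theory Num.Theory.
Local Open Scope classical_set_scope.
Local Open Scope ring_scope.

Section PM.
Context {d : measure_display} {T : measurableType d} {R : realType}.
Variable P : probability T R.

Definition Ex (f : T -> R) : R := fine (\int[P]_t (f t)%:E).
Definition Var (f : T -> R) : R := Ex (fun t => (f t - Ex f) ^+ 2).

Definition mutually_independent n (X : 'I_n -> T -> R) : Prop :=
  forall B : 'I_n -> set R, (forall i, measurable (B i)) ->
    P (\bigcap_(i : 'I_n) (X i @^-1` B i)) = (\prod_(i < n) P (X i @^-1` B i))%E.

Definition iid_sample_from n (F : R -> R) (X : 'I_n -> T -> R) : Prop :=
  [/\ (forall i, measurable_fun setT (X i)),
      mutually_independent X,
      (forall i x, P (X i @^-1` `]-oo, x]) = (F x)%:E) &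
      (forall i, P.-integrable setT (fun t => ((X i t) ^+ 2)%:E))].

Definition nondegenerate_df (F : R -> R) : Prop := exists x, 0 < F x < 1.
End PM.

(* partial maximum X_{j+1:j+1} = max{X_1,...,X_{j+1}} (0-based index j) *)
Definition pmax {T : Type} {R : realType} n (X : 'I_n.+1 -> T -> R) (j : nat) (t : T) : R :=
  \big[Num.max/X ord0 t]_(i < n.+1 | (i <= j)%N) X i t.

(* partial maxima spacings Z_{i+1} = X_{i+2:i+2} - X_{i+1:i+1}, i < n *)
Definition spacings {T : Type} {R : realType} n (X : 'I_n.+1 -> T -> R) (t : T) : 'cV[R]_n :=
  \col_(i < n) (pmax X i.+1 t - pmax X i t).

Definition locscale {T : Type} {R : realType} n (th1 th2 : R) (X : 'I_n -> T -> R) : 'I_n -> T -> R :=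
  fun i t => th1 + th2 * X i t.

Definition linest {T : Type} {R : realType} n (c : 'I_n.+1 -> R) (X : 'I_n.+1 -> T -> R) (t : T) : R :=
  \sum_(i < n.+1) c i * pmax X i t.

Section Est.
Context {d : measure_display} {T : measurableType d} {R : realType}.
Variables (P : probability T R) (n : nat) (X : 'I_n.+1 -> T -> R).

Definition Xstar th1 th2 := locscale th1 th2 X.

Definition unbiased_theta2 (c : 'I_n.+1 -> R) : Prop :=
  forall th1 th2 : R, 0 < th2 -> Ex P (linest c (Xstar th1 th2)) = th2.

Definition is_BLUE_theta2 (c : 'I_n.+1 -> R) : Prop :=
  unbiased_theta2 c /\
  forall c', unbiased_theta2 c' -> forall th1 th2 : R, 0 < th2 ->
    Var P (linest c (Xstar th1 th2)) <= Var P (linest c' (Xstar th1 th2)).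

Definition invariant_theta2 (c : 'I_n.+1 -> R) : Prop :=
  forall (x : 'I_n.+1 -> R) (a b : R), 0 < b ->
    \sum_(i < n.+1) c i * (b * x i + a) = b * \sum_(i < n.+1) c i * x i.

Definition MSE_theta2 (c : 'I_n.+1 -> R) th1 th2 : R :=
  Ex P (fun t => (linest c (Xstar th1 th2) t - th2) ^+ 2).

Definition is_BLIE_theta2 (c : 'I_n.+1 -> R) : Prop :=
  invariant_theta2 c /\
  forall c', invariant_theta2 c' -> forall th1 th2 : R, 0 < th2 ->
    MSE_theta2 c th1 th2 <= MSE_theta2 c' th1 th2.
End Est.

Definition mvec {d} {T : measurableType d} {R : realType} (P : probability T R) n
  (X : 'I_n.+1 -> T -> R) : 'cV[R]_n :=
  \col_i Ex P (fun t => spacings X t i ord0).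
Definition Smat {d} {T : measurableType d} {R : realType} (P : probability T R) n
  (X : 'I_n.+1 -> T -> R) : 'M[R]_n :=
  \matrix_(i, j) Ex P (fun t => (spacings X t i ord0 - mvec P X i ord0) *
                                (spacings X t j ord0 - mvec P X j ord0)).
Definition Dmat {d} {T : measurableType d} {R : realType} (P : probability T R) n
  (X : 'I_n.+1 -> T -> R) : 'M[R]_n :=
  \matrix_(i, j) Ex P (fun t => spacings X t i ord0 * spacings X t j ord0).

Definition posdef {R : realType} n (A : 'M[R]_n) : Prop :=
  forall v : 'cV[R]_n, v != 0 -> 0 < (v^T *m A *m v) ord0 ord0.

Definition qf {R : realType} n (u : 'cV[R]_n) (A : 'M[R]_n) (v : 'cV[R]_n) : R :=
  (u^T *m A *m v) ord0 ord0.

From HB Require Import structures.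
From mathcomp Require Import all_boot all_order all_algebra.
From mathcomp Require Import all_classical all_reals all_analysis.
From mathcomp Require Import measurable_realfun ring lra.
Import Order.TTheory GRing.Theory Num.Theory.
Local Open Scope classical_set_scope.
Local Open Scope ring_scope.

(* By Abel summation a linear statistic with coefficients c equals
   (sum_i c_i) X*_{1:1} + sum_j w_j Z*_j with w_j = sum_{i>j} c_i, and Z* = theta2 Z.
   Unbiasedness for theta2 then means sum_i c_i = 0 and w'm = 1, invariance means
   sum_i c_i = 0, and in both cases the statistic is theta2 w'Z.  Its variance is
   theta2^2 w'Sw and its mean squared error theta2^2 (w'Dw - 2 w'm + 1), so both problems
   minimise a positive definite quadratic form in w (under the constraint w'm = 1 for the
   BLUE).  Completing the square gives the minimiser, the minimum, and, by positive
   definiteness, uniqueness of the optimal weights. *)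

Section Expectation.
Context {d : measure_display} {T : measurableType d} {R : realType}.
Variable P : probability T R.

Definition integrableR (f : T -> R) := P.-integrable setT (EFin \o f).

Lemma integrableR_cst a : integrableR (fun _ => a).
Proof. exact: finite_measure_integrable_cst. Qed.

Lemma integrableRD f g :
  integrableR f -> integrableR g -> integrableR (fun t => f t + g t).
Proof.
move=> hf hg; rewrite /integrableR.
have -> : EFin \o (fun t => f t + g t) = (EFin \o f) \+ (EFin \o g).
  by apply/funext => t /=; rewrite EFinD.
exact: integrableD.
Qed.

Lemma integrableRZ a f : integrableR f -> integrableR (fun t => a * f t).
Proof.
move=> hf; rewrite /integrableR.
have -> : EFin \o (fun t => a * f t) = (fun t => a%:E * (EFin \o f) t)%E.
  by apply/funext => t /=; rewrite EFinM.
exact: integrableZl.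
Qed.

Lemma integrableRB f g :
  integrableR f -> integrableR g -> integrableR (fun t => f t - g t).
Proof.
move=> hf hg; under eq_fun do rewrite -mulN1r.
exact/integrableRD/integrableRZ.
Qed.

Lemma integrableR_sum (I : Type) (s : seq I) (f : I -> T -> R) :
  (forall i, integrableR (f i)) -> integrableR (fun t => \sum_(i <- s) f i t).
Proof.
move=> hf; elim: s => [|i s IH]; first by under eq_fun do rewrite big_nil; exact: integrableR_cst.
by under eq_fun do rewrite big_cons; exact: integrableRD.
Qed.

Lemma integrableR_le (f g : T -> R) : measurable_fun setT f -> integrableR g ->
  (forall t, `|f t| <= g t) -> integrableR f.
Proof.
move=> mf ig fg; apply: (le_integrable measurableT _ _ ig).
  exact/measurable_EFinP.
by move=> t _ /=; rewrite lee_fin (le_trans (fg t)) // ler_norm.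
Qed.

Lemma ExD f g : integrableR f -> integrableR g ->
  Ex P (fun t => f t + g t) = Ex P f + Ex P g.
Proof.
move=> hf hg; rewrite /Ex; under eq_integral do rewrite EFinD.
by rewrite integralD // fineD //; exact: integrable_fin_num.
Qed.

Lemma ExZ a f : integrableR f -> Ex P (fun t => a * f t) = a * Ex P f.
Proof.
move=> hf; rewrite /Ex; under eq_integral do rewrite EFinM.
by rewrite integralZl // fineM //; exact: integrable_fin_num.
Qed.

Lemma Ex_cst a : Ex P (fun _ => a) = a.
Proof. by rewrite /Ex integral_cst // [X in (_ * X)%E]probability_setT mule1. Qed.

Lemma ExB f g : integrableR f -> integrableR g ->
  Ex P (fun t => f t - g t) = Ex P f - Ex P g.
Proof.
move=> hf hg; under eq_fun do rewrite -mulN1r.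
by rewrite ExD ?ExZ ?mulN1r //; exact: integrableRZ.
Qed.

Lemma Ex_sum (I : Type) (s : seq I) (f : I -> T -> R) :
  (forall i, integrableR (f i)) ->
  Ex P (fun t => \sum_(i <- s) f i t) = \sum_(i <- s) Ex P (f i).
Proof.
move=> hf; elim: s => [|i s IH]; first by under eq_fun do rewrite big_nil; rewrite big_nil Ex_cst.
under eq_fun do rewrite big_cons.
by rewrite big_cons ExD ?IH //; exact: integrableR_sum.
Qed.

Lemma Ex_covariance f g : integrableR f -> integrableR g ->
  integrableR (fun t => f t * g t) ->
  Ex P (fun t => (f t - Ex P f) * (g t - Ex P g)) = Ex P (fun t => f t * g t) - Ex P f * Ex P g.
Proof.
move=> intf intg intfg.
have -> : (fun t => (f t - Ex P f) * (g t - Ex P g)) =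
    (fun t => f t * g t - (Ex P g * f t + Ex P f * (g t - Ex P g))).
  by apply/funext => t; ring.
have intgB : integrableR (fun t => g t - Ex P g) by exact/integrableRB/integrableR_cst.
rewrite ExB ?ExD ?ExZ ?ExB ?Ex_cst //; first ring.
all: try by [apply: integrableRZ | apply: integrableR_cst].
by apply: integrableRD; apply: integrableRZ.
Qed.

Lemma Ex_ge0_eq0_sqr f : measurable_fun setT f -> integrableR f ->
  (forall t, 0 <= f t) -> Ex P f = 0 -> Ex P (fun t => f t ^+ 2) = 0.
Proof.
move=> mf intf f_ge0 Ef0.
have f_ae0 : ae_eq P setT (EFin \o f) (cst 0%E).
  apply/(ae_eq_integral_abs P measurableT); first exact/measurable_EFinP.
  under eq_integral do rewrite /= ger0_norm //.
  by rewrite -(fineK (integrable_fin_num measurableT intf)); exact: (congr1 EFin Ef0).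
rewrite /Ex (ae_eq_integral (cst 0%E)) ?integral0 //.
- exact/measurable_EFinP/measurable_funX.
- by move: f_ae0; apply: filterS => t /= f0 /f0 [->]; rewrite expr0n.
Qed.

End Expectation.

Lemma measure_neq_eq0 {d} {T : measurableType d} {R : realType}
    (mu : {measure set T -> \bar R}) (f g : T -> R) :
  f =1 g -> mu [set t | f t != g t] = 0%E.
Proof.
move=> fg; rewrite (_ : [set t | _] = set0) ?measure0 //.
by apply/seteqP; split => t //=; rewrite fg eqxx.
Qed.

Section QuadraticForm.
Context {R : realType} {n : nat}.
Implicit Types (A : 'M[R]_n) (u w : 'rV[R]_n) (m : 'cV[R]_n).

Definition qform A w : R := (w *m A *m w^T) 0 0.

Lemma qform_sumE A w : qform A w = \sum_(k < n) \sum_(j < n) w 0 j * w 0 k * A j k.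
Proof.
rewrite /qform mxE; apply: eq_bigr => k _; rewrite mxE mulr_suml.
by apply: eq_bigr => j _; rewrite !mxE; ring.
Qed.

Lemma scalemx_mul_entry a u (v : 'cV[R]_n) : (a *: u *m v) 0 0 = a * (u *m v) 0 0.
Proof. by rewrite -scalemxAl mxE. Qed.

Lemma qformZ A a w : qform A (a *: w) = a ^+ 2 * qform A w.
Proof. by rewrite /qform linearZ /= -!scalemxAl -scalemxAr scalerA !mxE expr2. Qed.

Lemma qform0 A : qform A 0 = 0.
Proof. by rewrite /qform !mul0mx mxE. Qed.

Lemma qform_delta A j : qform A (delta_mx 0 j) = A j j.
Proof. by rewrite /qform trmx_delta -rowE -colE !mxE. Qed.

Lemma posdef_qform_gt0 {A w} : posdef A -> w != 0 -> 0 < qform A w.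
Proof.
move=> A_pd w_neq0; have := A_pd w^T; rewrite trmxK; apply.
by apply: contra w_neq0 => /eqP wT0; rewrite -[w]trmxK wT0 linear0.
Qed.

Lemma posdef_qform_ge0 {A} w : posdef A -> 0 <= qform A w.
Proof.
move=> A_pd; have [->|w_neq0] := eqVneq w 0; first by rewrite qform0.
exact/ltW/posdef_qform_gt0.
Qed.

Lemma posdef_qform_le0 {A w} : posdef A -> qform A w <= 0 -> w = 0.
Proof.
move=> A_pd; apply: contraTeq => w_neq0; rewrite -ltNge.
exact: posdef_qform_gt0.
Qed.

Lemma posdef_unitmx {A} : posdef A -> A \in unitmx.
Proof.
move=> A_pd; rewrite unitmxE unitfE -det_tr; apply/negP => /det0P [w w_neq0 wAT0].
have := posdef_qform_gt0 A_pd w_neq0; rewrite /qform -mulmxA.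
have -> : A *m w^T = 0 by rewrite -[A]trmxK -trmx_mul wAT0 linear0.
by rewrite mulmx0 mxE ltxx.
Qed.

Section Symmetric.
Variable A : 'M[R]_n.
Hypotheses (A_sym : A^T = A) (A_unit : A \in unitmx).

Lemma qform_invmx m : qform A (m^T *m invmx A) = qf m (invmx A) m.
Proof.
by rewrite /qform /qf trmx_mul trmxK trmx_inv A_sym -(mulmxA _ _ A) mulVmx // mulmx1 mulmxA.
Qed.

(* Completing the square around the vertex [m' A^-1] of [w |-> w A w' - 2 (w m)]. *)
Lemma qform_shift m w a :
  qform A (w - a *: (m^T *m invmx A)) =
  qform A w - 2 * a * (w *m m) 0 0 + a ^+ 2 * qf m (invmx A) m.
Proof.
set v := m^T *m invmx A.
have vT : v^T = invmx A *m m by rewrite /v trmx_mul trmxK trmx_inv A_sym.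
have wAv : w *m A *m v^T = w *m m by rewrite vT mulmxA -(mulmxA w) mulmxV // mulmx1.
have vAw : v *m A *m w^T = (w *m m)^T.
  by rewrite /v -(mulmxA _ _ A) mulVmx // mulmx1 trmx_mul.
rewrite -qform_invmx /qform -/v !mulmxBl [(w - _)^T]linearB /= [(a *: v)^T]linearZ /=.
rewrite !mulmxBr -!scalemxAl -!scalemxAr wAv vAw !mxE; ring.
Qed.

Lemma posdef_qf_invmx_gt0 {m} : posdef A -> m != 0 -> 0 < qf m (invmx A) m.
Proof.
move=> A_pd m_neq0; rewrite -qform_invmx; apply: posdef_qform_gt0 => //.
apply: contra m_neq0 => /eqP mA0.
have : m^T *m invmx A *m A = 0 by rewrite mA0 mul0mx.
by rewrite -mulmxA mulVmx // mulmx1 => mT0; rewrite -[m]trmxK mT0 linear0.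
Qed.

Lemma qform_on_hyperplane m w : posdef A -> m != 0 -> (w *m m) 0 0 = 1 ->
  qform A w = (qf m (invmx A) m)^-1 +
              qform A (w - (qf m (invmx A) m)^-1 *: (m^T *m invmx A)).
Proof.
move=> A_pd m_neq0 wm1; have := posdef_qf_invmx_gt0 A_pd m_neq0.
by rewrite qform_shift wm1; set q := qf _ _ _ => q_gt0; field; rewrite gt_eqF.
Qed.

Lemma qform_subr_linear m w :
  qform A w - 2 * (w *m m) 0 0 = qform A (w - m^T *m invmx A) - qf m (invmx A) m.
Proof. by rewrite -[m^T *m _]scale1r qform_shift; ring. Qed.

End Symmetric.
End QuadraticForm.

Section PartialMaxima.
Context {T : Type} {R : realType} {n : nat}.
Variable X : 'I_n.+1 -> T -> R.

Lemma pmax_attained j t : exists2 i : 'I_n.+1, (i <= j)%N & pmax X j t = X i t.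
Proof.
rewrite /pmax; elim/big_ind: _ => [|x y [i ij ->] [k kj ->]|i ij]; [by exists ord0| |by exists i].
by rewrite /Num.max /Order.max; case: ifP => _; [exists k|exists i].
Qed.

Lemma pmax_le j t : pmax X j t <= pmax X j.+1 t.
Proof. by have [i ij ->] := pmax_attained j t; apply: le_bigmax_cond; exact: leqW. Qed.

Lemma pmax_locscale th1 th2 j t : 0 < th2 ->
  pmax (locscale th1 th2 X) j t = th1 + th2 * pmax X j t.
Proof.
move=> th2_gt0; pose f x := th1 + th2 * x.
have f_max x y : f (Num.max x y) = Num.max (f x) (f y).
  by rewrite /f maxr_pMr ?ltW // addr_maxr.
by rewrite /pmax; symmetry; exact: (big_morph f f_max erefl).
Qed.

Lemma spacings_locscale th1 th2 t : 0 < th2 ->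
  spacings (locscale th1 th2 X) t = th2 *: spacings X t.
Proof. by move=> th2_gt0; apply/matrixP => i j; rewrite !mxE !pmax_locscale //; ring. Qed.

End PartialMaxima.

Section AbelSummation.
Context {R : comRingType} {n : nat}.
Implicit Types (c : 'I_n.+1 -> R) (w : 'rV[R]_n) (p : nat -> R).

Definition spacing_weights c : 'rV[R]_n := \row_(j < n) \sum_(i < n.+1 | (j < i)%N) c i.

Definition weight_at w (j : nat) : R :=
  if @insub nat (fun k => (k < n)%N) 'I_n j is Some k then w 0 k else 0.

(* The coefficients [c_i = w_(i-1) - w_i] of the statistic [sum_j w_j Z_j]. *)
Definition coef_of_weights w (i : 'I_n.+1) : R :=
  (if (0 < i)%N then weight_at w i.-1 else 0) - weight_at w i.

Lemma weight_at_ord w (k : 'I_n) : weight_at w k = w 0 k.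
Proof. by rewrite /weight_at valK. Qed.

Lemma weight_at_ge w j : (n <= j)%N -> weight_at w j = 0.
Proof. by move=> nj; rewrite /weight_at insubF // ltnNge nj. Qed.

Lemma sum_coef_of_weights w p :
  \sum_(i < n.+1) coef_of_weights w i * p i = \sum_(j < n) w 0 j * (p j.+1 - p j).
Proof.
have -> : \sum_(i < n.+1) coef_of_weights w i * p i =
    \sum_(0 <= i < n.+1) ((if (0 < i)%N then weight_at w i.-1 else 0) - weight_at w i) * p i.
  by rewrite big_mkord.
have -> : \sum_(j < n) w 0 j * (p j.+1 - p j) = \sum_(0 <= j < n) weight_at w j * (p j.+1 - p j).
  by rewrite big_mkord; apply: eq_bigr => j _; rewrite weight_at_ord.
under eq_bigr do rewrite mulrBl.
rewrite sumrB big_nat_recl // big_nat_recr //= weight_at_ge // !mul0r add0r addr0.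
by under [RHS]eq_bigr do rewrite mulrBr; rewrite sumrB.
Qed.

Lemma telescope_ord p (i : 'I_n.+1) :
  p i = p 0%N + \sum_(j < n | (j < i)%N) (p j.+1 - p j).
Proof.
have i_le_n : (i <= n)%N by rewrite -ltnS.
rewrite -(big_mkord (fun j => (j < i)%N) (fun j => p j.+1 - p j)).
have /= <- := big_nat_widen 0 i n xpredT (fun j => p j.+1 - p j) i_le_n.
by rewrite telescope_sumr // addrC subrK.
Qed.

Lemma sum_spacing_weights c p :
  \sum_(i < n.+1) c i * p i =
  (\sum_(i < n.+1) c i) * p 0%N + \sum_(j < n) spacing_weights c 0 j * (p j.+1 - p j).
Proof.
under eq_bigr do rewrite (telescope_ord p) mulrDr.
rewrite big_split /= mulr_suml; congr (_ + _).
under eq_bigr do rewrite mulr_sumr big_mkcond.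
rewrite exchange_big /=; apply: eq_bigr => j _.
rewrite mxE mulr_suml [RHS]big_mkcond; apply: eq_bigr => i _.
by case: ifP => _; rewrite ?mul0r.
Qed.

Lemma sum_coef_of_weights_eq0 w : \sum_(i < n.+1) coef_of_weights w i = 0.
Proof.
under eq_bigr do rewrite -[coef_of_weights _ _]mulr1.
by rewrite (sum_coef_of_weights w (fun=> 1)) big1 // => j _; rewrite subrr mulr0.
Qed.

Lemma spacing_weightsK w : spacing_weights (coef_of_weights w) = w.
Proof.
apply/rowP => j; rewrite mxE.
have := sum_coef_of_weights w (fun k => (j < k)%N%:R).
have -> : \sum_(k < n) w 0 k * ((j < k.+1)%N%:R - (j < k)%N%:R) = w 0 j.
  rewrite (bigD1 j) //= ltnSn ltnn subr0 mulr1 big1 ?addr0 // => k /negPf kj.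
  by rewrite ltnS leq_eqVlt eq_sym val_eqE kj subrr mulr0.
by move=> <-; rewrite big_mkcond; apply: eq_bigr => i _; case: ifP; rewrite ?mulr1 ?mulr0.
Qed.

End AbelSummation.

Lemma measurable_bigmax {d} {T : measurableType d} {R : realType} (I : Type) (s : seq I)
    (Q : pred I) (F : I -> T -> R) (f0 : T -> R) :
  measurable_fun setT f0 -> (forall i, measurable_fun setT (F i)) ->
  measurable_fun setT (fun t => \big[Num.max/f0 t]_(i <- s | Q i) F i t).
Proof.
move=> f0_meas F_meas; elim: s => [|i s IH]; first by under eq_fun do rewrite big_nil.
under eq_fun do rewrite big_cons; case: (Q i) => //.
exact: measurable_maxr.
Qed.

Section Spacings.
Context {d : measure_display} {T : measurableType d} {R : realType}.
Variables (P : probability T R) (n : nat) (X : 'I_n.+1 -> T -> R).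
Hypothesis X_meas : forall i, measurable_fun setT (X i).
Hypothesis X_sqr_int : forall i, P.-integrable setT (fun t => ((X i t) ^+ 2)%:E).

Local Notation m := (mvec P X).
Local Notation S := (Smat P X).
Local Notation D := (Dmat P X).
Local Notation integrableR := (integrableR P).

Definition spacing (j : nat) (t : T) : R := pmax X j.+1 t - pmax X j t.

Lemma spacingsE t (j : 'I_n) : spacings X t j 0 = spacing j t.
Proof. by rewrite mxE. Qed.

(* Every product of two partial maxima is dominated by this integrable envelope. *)
Definition envelope (t : T) : R := 1 + \sum_i X i t ^+ 2.

Lemma integrable_envelope : integrableR envelope.
Proof. exact/integrableRD/integrableR_sum/X_sqr_int/integrableR_cst. Qed.

Lemma le_envelope i t : 1 + X i t ^+ 2 <= envelope t.
Proof.
by rewrite /envelope (bigD1 i) //= addrA lerDl sumr_ge0 // => k _; exact: sqr_ge0.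
Qed.

Lemma measurable_pmax j : measurable_fun setT (pmax X j).
Proof. exact: measurable_bigmax. Qed.

Lemma integrable_pmax j : integrableR (pmax X j).
Proof.
apply: integrableR_le (measurable_pmax j) integrable_envelope _ => t.
have [i _ ->] := pmax_attained X j t; apply: le_trans (le_envelope i t).
have := real_normK (num_real (X i t)); nra.
Qed.

Lemma integrable_pmaxM j k : integrableR (fun t => pmax X j t * pmax X k t).
Proof.
apply: integrableR_le integrable_envelope _.
  exact: measurable_funM (measurable_pmax j) (measurable_pmax k).
move=> t; have [i _ ->] := pmax_attained X j t; have [l _ ->] := pmax_attained X k t.
have := le_envelope i t; have := le_envelope l t.
have := real_normK (num_real (X i t)); have := real_normK (num_real (X l t)).
rewrite normrM; nra.
Qed.

Lemma integrable_spacing j : integrableR (spacing j).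
Proof. exact: integrableRB (integrable_pmax _) (integrable_pmax _). Qed.

Lemma integrable_spacingM j k : integrableR (fun t => spacing j t * spacing k t).
Proof.
have -> : (fun t => spacing j t * spacing k t) = (fun t =>
    (pmax X j.+1 t * pmax X k.+1 t + pmax X j t * pmax X k t) -
    (pmax X j.+1 t * pmax X k t + pmax X j t * pmax X k.+1 t)).
  by apply/funext => t; rewrite /spacing; ring.
by apply: integrableRB; apply: integrableRD; exact: integrable_pmaxM.
Qed.

Lemma mvecE (j : 'I_n) : m j 0 = Ex P (spacing j).
Proof. by rewrite mxE; under eq_fun do rewrite spacingsE. Qed.

Lemma DmatE (j k : 'I_n) : D j k = Ex P (fun t => spacing j t * spacing k t).
Proof. by rewrite mxE; under eq_fun do rewrite !spacingsE. Qed.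

Lemma SmatE (j k : 'I_n) : S j k = D j k - m j 0 * m k 0.
Proof.
rewrite DmatE mxE; under eq_fun do rewrite !spacingsE !mvecE.
rewrite !mvecE Ex_covariance //; last exact: integrable_spacingM.
all: exact: integrable_spacing.
Qed.

Lemma Smat_sym : S^T = S.
Proof. by apply/matrixP => i j; rewrite !mxE; under eq_fun do rewrite mulrC. Qed.

Lemma Dmat_sym : D^T = D.
Proof. by apply/matrixP => i j; rewrite !mxE; under eq_fun do rewrite mulrC. Qed.

Lemma mvec_neq0 : (0 < n)%N -> posdef S -> m != 0.
Proof.
(* If m = 0, the nonnegative spacing Z_j has mean 0, so S_jj = E[Z_j^2] = 0. *)
move=> n_gt0 S_pd; apply/eqP => m0; pose j := Ordinal n_gt0.
have e_neq0 : delta_mx 0 j != 0 :> 'rV[R]_n.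
  by apply/eqP => /matrixP/(_ 0 j); rewrite !mxE !eqxx; exact/eqP/oner_neq0.
have := posdef_qform_gt0 S_pd e_neq0; rewrite qform_delta SmatE DmatE.
have mj0 : Ex P (spacing j) = 0 by rewrite -mvecE m0 mxE.
under eq_fun do rewrite -expr2.
rewrite !mvecE mj0 Ex_ge0_eq0_sqr // ?mul0r ?subr0 ?ltxx //.
- by apply: measurable_funB; exact: measurable_pmax.
- exact: integrable_spacing.
- by move=> t; rewrite subr_ge0 pmax_le.
Qed.

Definition spacing_stat (w : 'rV[R]_n) (t : T) : R := (w *m spacings X t) 0 0.

Lemma spacing_statE w t : spacing_stat w t = \sum_(j < n) w 0 j * spacing j t.
Proof. by rewrite /spacing_stat mxE; under eq_bigr do rewrite spacingsE. Qed.

Lemma spacing_statZ a w t : spacing_stat (a *: w) t = a * spacing_stat w t.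
Proof. exact: scalemx_mul_entry. Qed.

Lemma integrable_spacing_stat w : integrableR (spacing_stat w).
Proof.
rewrite (funext (spacing_statE w)).
by apply: integrableR_sum => j; exact/integrableRZ/integrable_spacing.
Qed.

Lemma Ex_spacing_stat w : Ex P (spacing_stat w) = (w *m m) 0 0.
Proof.
rewrite (funext (spacing_statE w)) Ex_sum => [|j]; last exact/integrableRZ/integrable_spacing.
by rewrite mxE; apply: eq_bigr => j _; rewrite ExZ ?mvecE //; exact: integrable_spacing.
Qed.

Lemma spacing_stat_sqrE w t : spacing_stat w t ^+ 2 =
  \sum_(k < n) \sum_(j < n) (w 0 j * w 0 k) * (spacing j t * spacing k t).
Proof.
rewrite expr2 {2}spacing_statE mulr_sumr; apply: eq_bigr => k _.
by rewrite spacing_statE mulr_suml; apply: eq_bigr => j _; ring.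
Qed.

Lemma integrable_spacing_stat_sqr w : integrableR (fun t => spacing_stat w t ^+ 2).
Proof.
under eq_fun do rewrite spacing_stat_sqrE.
by do 2 apply: integrableR_sum => ?; exact/integrableRZ/integrable_spacingM.
Qed.

Lemma Ex_spacing_stat_sqr w : Ex P (fun t => spacing_stat w t ^+ 2) = qform D w.
Proof.
under eq_fun do rewrite spacing_stat_sqrE.
rewrite qform_sumE Ex_sum => [|k]; last first.
  by apply: integrableR_sum => j; exact/integrableRZ/integrable_spacingM.
apply: eq_bigr => k _; rewrite Ex_sum => [|j]; last exact/integrableRZ/integrable_spacingM.
by apply: eq_bigr => j _; rewrite ExZ ?DmatE //; exact: integrable_spacingM.
Qed.

Lemma Ex_sqr_spacing_stat a w :
  Ex P (fun t => (a + spacing_stat w t) ^+ 2) = a ^+ 2 + 2 * a * (w *m m) 0 0 + qform D w.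
Proof.
have -> : (fun t => (a + spacing_stat w t) ^+ 2) =
    (fun t => (a ^+ 2 + (2 * a) * spacing_stat w t) + spacing_stat w t ^+ 2).
  by apply/funext => t; ring.
have stat_int := integrable_spacing_stat w.
rewrite ExD ?ExD ?Ex_cst ?ExZ ?Ex_spacing_stat ?Ex_spacing_stat_sqr //.
- exact: integrableR_cst.
- exact: integrableRZ.
- by apply: integrableRD; [exact: integrableR_cst|exact: integrableRZ].
- exact: integrable_spacing_stat_sqr.
Qed.

Lemma qform_Smat w : qform S w = qform D w - ((w *m m) 0 0) ^+ 2.
Proof.
have wm : (w *m m) 0 0 = \sum_j w 0 j * m j 0 by rewrite mxE.
rewrite !qform_sumE expr2 {1}wm mulr_suml -sumrB; apply: eq_bigr => k _.
by rewrite wm mulr_sumr -sumrB; apply: eq_bigr => j _; rewrite SmatE; ring.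
Qed.

Lemma Var_spacing_stat th2 w :
  Var P (fun t => th2 * spacing_stat w t) = th2 ^+ 2 * qform S w.
Proof.
rewrite /Var ExZ ?Ex_spacing_stat; last exact: integrable_spacing_stat.
have -> : (fun t => (th2 * spacing_stat w t - th2 * (w *m m) 0 0) ^+ 2) =
    (fun t => (- (th2 * (w *m m) 0 0) + spacing_stat (th2 *: w) t) ^+ 2).
  by apply/funext => t; rewrite spacing_statZ; ring.
by rewrite Ex_sqr_spacing_stat qformZ qform_Smat scalemx_mul_entry; ring.
Qed.

Lemma MSE_spacing_stat th2 w :
  Ex P (fun t => (th2 * spacing_stat w t - th2) ^+ 2) =
  th2 ^+ 2 * (qform D w - 2 * (w *m m) 0 0 + 1).
Proof.
have -> : (fun t => (th2 * spacing_stat w t - th2) ^+ 2) =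
    (fun t => (- th2 + spacing_stat (th2 *: w) t) ^+ 2).
  by apply/funext => t; rewrite spacing_statZ; ring.
by rewrite Ex_sqr_spacing_stat qformZ scalemx_mul_entry; ring.
Qed.

Lemma linest_locscale (c : 'I_n.+1 -> R) th1 th2 t : 0 < th2 ->
  linest c (Xstar X th1 th2) t = th1 * \sum_i c i +
    th2 * ((\sum_i c i) * pmax X 0 t + spacing_stat (spacing_weights c) t).
Proof.
move=> th2_gt0; rewrite /linest /Xstar.
under eq_bigr do rewrite pmax_locscale // mulrDr mulrCA.
rewrite big_split /= -mulr_suml -mulr_sumr (sum_spacing_weights c (fun k => pmax X k t)).
by rewrite spacing_statE; congr (_ + _); exact: mulrC.
Qed.

Lemma linest_sum_eq0 (c : 'I_n.+1 -> R) th1 th2 : 0 < th2 -> \sum_i c i = 0 ->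
  linest c (Xstar X th1 th2) = fun t => th2 * spacing_stat (spacing_weights c) t.
Proof.
by move=> th2_gt0 c0; apply/funext => t; rewrite linest_locscale // c0 !mul0r mulr0 !add0r.
Qed.

Lemma linest_coef_of_weights w th1 th2 t : 0 < th2 ->
  linest (coef_of_weights w) (Xstar X th1 th2) t = (w *m spacings (Xstar X th1 th2) t) 0 0.
Proof.
move=> th2_gt0; rewrite linest_sum_eq0 ?sum_coef_of_weights_eq0 // spacing_weightsK.
by rewrite spacings_locscale // -scalemxAr mxE.
Qed.

Lemma Ex_linest (c : 'I_n.+1 -> R) th1 th2 : 0 < th2 ->
  Ex P (linest c (Xstar X th1 th2)) = th1 * \sum_i c i +
    th2 * ((\sum_i c i) * Ex P (pmax X 0) + (spacing_weights c *m m) 0 0).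
Proof.
move=> th2_gt0; rewrite (funext (linest_locscale c th1 th2 ^~ th2_gt0)).
have pmax0_int := integrable_pmax 0.
have stat_int := integrable_spacing_stat (spacing_weights c).
have sum_int : integrableR
    (fun t => (\sum_i c i) * pmax X 0 t + spacing_stat (spacing_weights c) t).
  by apply: integrableRD => //; exact: integrableRZ.
rewrite ExD ?Ex_cst ?ExZ ?ExD ?ExZ ?Ex_spacing_stat //.
all: by [exact: integrableR_cst | exact: integrableRZ].
Qed.

Lemma unbiased_theta2P (c : 'I_n.+1 -> R) :
  unbiased_theta2 P X c <-> \sum_i c i = 0 /\ (spacing_weights c *m m) 0 0 = 1.
Proof.
split => [c_unb|[c0 cm1] th1 th2 th2_gt0]; last first.
  by rewrite Ex_linest // c0 cm1 !mul0r mulr0 !add0r mulr1.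
have E01 := c_unb 0 1 ltr01; have E11 := c_unb 1 1 ltr01.
rewrite !Ex_linest // !mul1r mul0r add0r in E01 E11.
have c0 : \sum_i c i = 0 by lra.
by move: E01; rewrite c0 mul0r add0r.
Qed.

Lemma invariant_theta2P (c : 'I_n.+1 -> R) : invariant_theta2 c <-> \sum_i c i = 0.
Proof.
split => [c_inv|c0 x a b _].
  have := c_inv (fun=> 0) 1 1 ltr01; under eq_bigr do rewrite mulr0 add0r mulr1.
  by rewrite mul1r => ->; rewrite big1 // => i _; rewrite mulr0.
under eq_bigr do rewrite mulrDr.
rewrite big_split /= -mulr_suml c0 mul0r addr0 mulr_sumr.
by apply: eq_bigr => i _; ring.
Qed.

Definition blue_weights : 'rV[R]_n := (qf m (invmx S) m)^-1 *: (m^T *m invmx S).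

Definition blie_weights : 'rV[R]_n := m^T *m invmx D.

Lemma Var_unbiased (c : 'I_n.+1 -> R) th1 th2 :
  (0 < n)%N -> posdef S -> unbiased_theta2 P X c -> 0 < th2 ->
  Var P (linest c (Xstar X th1 th2)) =
  th2 ^+ 2 * ((qf m (invmx S) m)^-1 + qform S (spacing_weights c - blue_weights)).
Proof.
move=> n_gt0 S_pd /unbiased_theta2P [c0 cm1] th2_gt0.
have m_neq0 := mvec_neq0 n_gt0 S_pd.
by rewrite linest_sum_eq0 // Var_spacing_stat
  (qform_on_hyperplane _ Smat_sym (posdef_unitmx S_pd) _ _ S_pd m_neq0 cm1).
Qed.

Lemma MSE_invariant (c : 'I_n.+1 -> R) th1 th2 :
  posdef D -> invariant_theta2 c -> 0 < th2 ->
  MSE_theta2 P X c th1 th2 =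
  th2 ^+ 2 * (1 - qf m (invmx D) m + qform D (spacing_weights c - blie_weights)).
Proof.
move=> D_pd /invariant_theta2P c0 th2_gt0.
rewrite /MSE_theta2 linest_sum_eq0 // MSE_spacing_stat.
by rewrite (qform_subr_linear _ Dmat_sym (posdef_unitmx D_pd)); ring.
Qed.

Lemma partial_maxima_BLUE : (0 < n)%N -> posdef S ->
  exists c2 : 'I_n.+1 -> R,
     (forall th1 th2 t, 0 < th2 ->
        linest c2 (Xstar X th1 th2) t =
        qf m (invmx S) (spacings (Xstar X th1 th2) t) / qf m (invmx S) m)
     /\ is_BLUE_theta2 P X c2
     /\ (forall th1 th2, 0 < th2 ->
           Var P (linest c2 (Xstar X th1 th2)) = th2 ^+ 2 / qf m (invmx S) m)
     /\ (forall c, is_BLUE_theta2 P X c -> forall th1 th2, 0 < th2 ->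
           P [set t | linest c (Xstar X th1 th2) t != linest c2 (Xstar X th1 th2) t]
           = 0%E).
Proof.
move=> n_gt0 S_pd; set q := qf m (invmx S) m.
have q_gt0 : 0 < q :=
  posdef_qf_invmx_gt0 _ Smat_sym (posdef_unitmx S_pd) S_pd (mvec_neq0 n_gt0 S_pd).
pose c2 := coef_of_weights blue_weights.
have c2_unbiased : unbiased_theta2 P X c2.
  apply/unbiased_theta2P; rewrite sum_coef_of_weights_eq0 spacing_weightsK.
  by rewrite scalemx_mul_entry mulVf ?gt_eqF.
have Var_c2 th1 th2 : 0 < th2 -> Var P (linest c2 (Xstar X th1 th2)) = th2 ^+ 2 / q.
  by move=> th2_gt0; rewrite Var_unbiased // spacing_weightsK subrr qform0 addr0.
exists c2; split; [|split; [|split]] => //.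
- by move=> th1 th2 t th2_gt0; rewrite linest_coef_of_weights // scalemx_mul_entry mulrC.
- split=> // c c_unbiased th1 th2 th2_gt0.
  rewrite Var_c2 // Var_unbiased // mulrDr lerDl.
  exact: mulr_ge0 (sqr_ge0 _) (posdef_qform_ge0 _ S_pd).
- move=> c [c_unbiased c_min] th1 th2 th2_gt0; apply: measure_neq_eq0 => t.
  have := c_min _ c2_unbiased th1 th2 th2_gt0.
  rewrite Var_c2 // Var_unbiased // mulrDr gerDl pmulr_rle0 ?exprn_gt0 //.
  move=> /(posdef_qform_le0 S_pd)/eqP; rewrite subr_eq0 => /eqP c_weights.
  have /unbiased_theta2P [c0 _] := c_unbiased.
  by rewrite !linest_sum_eq0 ?sum_coef_of_weights_eq0 // spacing_weightsK c_weights.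
Qed.

Lemma partial_maxima_BLIE : posdef D ->
  exists c2 : 'I_n.+1 -> R,
     (forall th1 th2 t, 0 < th2 ->
        linest c2 (Xstar X th1 th2) t = qf m (invmx D) (spacings (Xstar X th1 th2) t))
     /\ is_BLIE_theta2 P X c2
     /\ (forall th1 th2, 0 < th2 ->
           MSE_theta2 P X c2 th1 th2 = (1 - qf m (invmx D) m) * th2 ^+ 2)
     /\ (forall c, is_BLIE_theta2 P X c -> forall th1 th2, 0 < th2 ->
           P [set t | linest c (Xstar X th1 th2) t != linest c2 (Xstar X th1 th2) t]
           = 0%E).
Proof.
move=> D_pd; pose c2 := coef_of_weights blie_weights.
have c2_invariant : invariant_theta2 c2 by apply/invariant_theta2P; exact: sum_coef_of_weights_eq0.
have MSE_c2 th1 th2 : 0 < th2 -> MSE_theta2 P X c2 th1 th2 = (1 - qf m (invmx D) m) * th2 ^+ 2.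
  by move=> th2_gt0; rewrite MSE_invariant // spacing_weightsK subrr qform0 addr0 mulrC.
exists c2; split; [|split; [|split]] => //.
- by move=> th1 th2 t th2_gt0; rewrite linest_coef_of_weights.
- split=> // c c_invariant th1 th2 th2_gt0.
  rewrite MSE_c2 // MSE_invariant // [X in X <= _]mulrC [X in _ <= X]mulrDr lerDl.
  exact: mulr_ge0 (sqr_ge0 _) (posdef_qform_ge0 _ D_pd).
- move=> c [c_invariant c_min] th1 th2 th2_gt0; apply: measure_neq_eq0 => t.
  have := c_min _ c2_invariant th1 th2 th2_gt0.
  rewrite MSE_c2 // MSE_invariant // [X in _ <= X]mulrC [X in X <= _]mulrDr gerDl.
  rewrite pmulr_rle0 ?exprn_gt0 //.
  move=> /(posdef_qform_le0 D_pd)/eqP; rewrite subr_eq0 => /eqP c_weights.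
  have /invariant_theta2P c0 := c_invariant.
  by rewrite !linest_sum_eq0 ?sum_coef_of_weights_eq0 // spacing_weightsK c_weights.
Qed.

End Spacings.

Theorem proposition4p1 (d : measure_display) (T : measurableType d) (R : realType)
  (P : probability T R) (n : nat) (F : R -> R) (X : 'I_n.+1 -> T -> R) :
  (1 <= n)%N ->
  iid_sample_from P F X -> nondegenerate_df F ->
  posdef (Smat P X) -> posdef (Dmat P X) ->
  let m := mvec P X in
  let S := Smat P X in
  let D := Dmat P X in
  (* BLUE *)
  (exists c2 : 'I_n.+1 -> R,
     (forall th1 th2 t, 0 < th2 ->
        linest c2 (Xstar X th1 th2) t =
        qf m (invmx S) (spacings (Xstar X th1 th2) t) / qf m (invmx S) m)
     /\ is_BLUE_theta2 P X c2
     /\ (forall th1 th2, 0 < th2 ->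
           Var P (linest c2 (Xstar X th1 th2)) = th2 ^+ 2 / qf m (invmx S) m)
     /\ (forall c, is_BLUE_theta2 P X c -> forall th1 th2, 0 < th2 ->
           P [set t | linest c (Xstar X th1 th2) t != linest c2 (Xstar X th1 th2) t]
           = 0%E))
  /\
  (* BLIE *)
  (exists c2 : 'I_n.+1 -> R,
     (forall th1 th2 t, 0 < th2 ->
        linest c2 (Xstar X th1 th2) t = qf m (invmx D) (spacings (Xstar X th1 th2) t))
     /\ is_BLIE_theta2 P X c2
     /\ (forall th1 th2, 0 < th2 ->
           MSE_theta2 P X c2 th1 th2 = (1 - qf m (invmx D) m) * th2 ^+ 2)
     /\ (forall c, is_BLIE_theta2 P X c -> forall th1 th2, 0 < th2 ->
           P [set t | linest c (Xstar X th1 th2) t != linest c2 (Xstar X th1 th2) t]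
           = 0%E)).
Proof.
(* Independence and nondegeneracy of F only matter through the positive definiteness of S and D. *)
move=> n_gt0 [X_meas _ _ X_sqr_int] _ S_pd D_pd.
by split; [exact: partial_maxima_BLUE | exact: partial_maxima_BLIE].
Qed.
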